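(* Let $\beta>0$ and let $A$ be a real random variable with $\Pr(0\le A<a_{\max})=1$ for some $a_{\max}>0$. Let $\eta\in(0,1]$ be the solution of $\beta=\dfrac{1-\eta}{1-\mathbb E\{1/(1+\eta A)\}}$. If $\beta\,\mathbb E\Big\{\dfrac{\eta A}{1+\eta A}\Big\}<\dfrac12$, then $$\Psi(A,\beta)\le \beta\log(1+a_{\max})+\log e\cdot\Big(\beta\,\frac{a_{\max}}{1+a_{\max}}\Big)^2.$$
   Context: Logarithms are base 2. For a nonnegative real random variable $A$ and $\beta>0$, $\Psi(A,\beta)=\beta\,\mathbb E\{\log(1+\eta A)\}-\log\eta+(\eta-1)\log e$, where $\eta\in(0,1]$ is the solution of $\beta=\dfrac{1-\eta}{1-\mathbb E\{1/(1+\eta A)\}}$ (equivalently $\eta=1-\beta\,\mathbb E\{\eta A/(1+\eta A)\}$). *)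

From Stdlib Require Import Reals Lra.
Open Scope R_scope.

Definition log2 (x : R) : R := ln x / ln 2.
Definition log2e : R := / ln 2.

Definition bounded_on (amax : R) (f : R -> R) : Prop :=
  exists M, forall x, 0 <= x < amax -> Rabs (f x) <= M.

(* The law of a real random variable A with Pr(0 <= A < amax) = 1, presented
   through its expectation operator  E f = E{ f(A) }  on functions that are
   bounded on [0, amax): it is linear, monotone w.r.t. the pointwise order on
   [0, amax) (so only the values on the support matter) and normalized. *)
Record RV_law (amax : R) := {
  Ex : (R -> R) -> R;
  Ex_lin : forall (f g : R -> R) (a b : R),
      bounded_on amax f -> bounded_on amax g ->
      Ex (fun x => a * f x + b * g x) = a * Ex f + b * Ex g;
  Ex_mono : forall f g : R -> R,
      bounded_on amax f -> bounded_on amax g ->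
      (forall x, 0 <= x < amax -> f x <= g x) -> Ex f <= Ex g;
  Ex_const : forall c : R, Ex (fun _ => c) = c
}.
Arguments Ex {amax} _ _.

(* eta is "the solution" in (0,1] of beta = (1-eta)/(1 - E{1/(1+eta A)}),
   in the equivalent form eta = 1 - beta E{eta A/(1+eta A)}. *)
Definition is_eta {amax : R} (P : RV_law amax) (beta eta : R) : Prop :=
  0 < eta <= 1 /\ eta = 1 - beta * Ex P (fun a => eta * a / (1 + eta * a)).

Definition Psi {amax : R} (P : RV_law amax) (beta eta : R) : R :=
  beta * Ex P (fun a => log2 (1 + eta * a)) - log2 eta + (eta - 1) * log2e.

(* Write t := beta E{eta A/(1+eta A)}, so that eta = 1 - t.  Then
   Psi = beta E{log(1+eta A)} + log e (-ln(1-t) - t).  Since 0 <= eta A < a_max on the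
   support, the first term is at most beta log(1+a_max) and t <= beta a_max/(1+a_max);
   the second term is controlled by -ln(1-t) <= t + t^2, valid for 0 <= t <= 1/2. *)
From Stdlib Require Import Reals Lra.
From Coquelicot Require Import Rcomplements.
Open Scope R_scope.

Lemma ln_1_sub_le (t : R) : 0 <= t <= 1 / 2 -> - ln (1 - t) <= t + t ^ 2.
Proof.
  intros [Ht0 Ht1].
  destruct (Rle_lt_or_eq_dec _ _ Ht0) as [Htpos | <-].
  2: { replace (1 - 0) with 1 by ring; rewrite ln_1; lra. }
  set (f := fun x => x + x ^ 2 + ln (1 - x)).
  set (f' := fun x => 1 + 2 * x - / (1 - x)).
  assert (Hderiv : forall c, 0 <= c <= t -> derivable_pt_lim f c (f' c)).
  { intros c Hc; unfold f, f'.
    replace (1 + 2 * c - / (1 - c)) with (1 + 2 * c + / (1 - c) * (-1)) by ring.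
    apply derivable_pt_lim_plus; [apply derivable_pt_lim_plus|].
    - apply derivable_pt_lim_id.
    - replace (2 * c) with (INR 2 * c ^ (2 - 1)) by (simpl; ring).
      apply derivable_pt_lim_pow.
    - apply (derivable_pt_lim_comp (fun x => 1 - x) ln).
      + replace (-1) with (0 - 1) by ring.
        apply derivable_pt_lim_minus; [apply derivable_pt_lim_const | apply derivable_pt_lim_id].
      + apply derivable_pt_lim_ln; lra. }
  destruct (MVT_cor2 f f' 0 t Htpos Hderiv) as [c [Hmvt Hc]].
  assert (Hf'_nonneg : 0 <= f' c).
  { unfold f'.
    replace (1 + 2 * c - / (1 - c)) with (c * (1 - 2 * c) / (1 - c)) by (field; lra).
    apply Rmult_le_pos; [apply Rmult_le_pos; lra | left; apply Rinv_0_lt_compat; lra]. }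
  assert (0 <= f' c * (t - 0)) by (apply Rmult_le_pos; lra).
  unfold f in Hmvt; replace (1 - 0) with 1 in Hmvt by ring; rewrite ln_1 in Hmvt.
  lra.
Qed.

Lemma log2_le (x y : R) : 0 < x -> x <= y -> log2 x <= log2 y.
Proof.
  intros Hx Hxy; unfold log2, Rdiv.
  apply Rmult_le_compat_r; [left; apply Rinv_0_lt_compat | apply ln_le]; try lra.
  rewrite <- ln_1; apply ln_increasing; lra.
Qed.

Lemma frac_1_add_le (u v : R) : 0 <= u -> u <= v -> u / (1 + u) <= v / (1 + v).
Proof.
  intros Hu Huv; unfold Rdiv.
  apply (Rmult_le_reg_r ((1 + u) * (1 + v))); [nra|].
  replace (u * / (1 + u) * ((1 + u) * (1 + v))) with (u * (1 + v)) by (field; lra).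
  replace (v * / (1 + v) * ((1 + u) * (1 + v))) with (v * (1 + u)) by (field; lra).
  nra.
Qed.

Lemma Ex_between {amax : R} (P : RV_law amax) (f : R -> R) (lo hi : R) :
  (forall x, 0 <= x < amax -> lo <= f x <= hi) -> lo <= Ex P f <= hi.
Proof.
  intros Hf.
  assert (Hconst : forall k, bounded_on amax (fun _ => k))
    by (intro k; exists (Rabs k); intros; lra).
  assert (Hfb : bounded_on amax f).
  { exists (Rmax (Rabs lo) (Rabs hi)); intros x Hx.
    destruct (Hf x Hx); apply RmaxAbs; assumption. }
  rewrite <- (Ex_const _ P lo), <- (Ex_const _ P hi) at 1.
  split; apply Ex_mono; auto; intros x Hx; apply Hf; assumption.
Qed.

Lemma Psi_of_is_eta {amax : R} (P : RV_law amax) (beta eta : R) :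
  let t := beta * Ex P (fun a => eta * a / (1 + eta * a)) in
  eta = 1 - t ->
  Psi P beta eta = beta * Ex P (fun a => log2 (1 + eta * a)) + log2e * (- ln (1 - t) - t).
Proof.
  intros t Heta; unfold Psi, log2e.
  replace (eta - 1) with (- t) by lra.
  replace (log2 eta) with (log2 (1 - t)) by (rewrite <- Heta; reflexivity).
  unfold log2, Rdiv; ring.
Qed.

Theorem mainTheorem11 (beta amax : R) (P : RV_law amax) (eta : R)
  (hbeta : 0 < beta) (hamax : 0 < amax)
  (heta : is_eta P beta eta)
  (hsmall : beta * Ex P (fun a => eta * a / (1 + eta * a)) < 1 / 2) :
  Psi P beta eta <=
    beta * log2 (1 + amax) + log2e * (beta * (amax / (1 + amax))) ^ 2.
Proof.
  destruct heta as [[Heta0 Heta1] Heta].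
  rewrite (Psi_of_is_eta P beta eta Heta).
  set (t := beta * Ex P (fun a => eta * a / (1 + eta * a))) in *.
  assert (Hsupport : forall x, 0 <= x < amax -> 0 <= eta * x <= amax) by (intros; nra).
  assert (Hfrac := Ex_between P (fun a => eta * a / (1 + eta * a)) 0 (amax / (1 + amax))).
  destruct Hfrac as [Hfrac0 Hfrac1].
  { intros x Hx; destruct (Hsupport x Hx); split.
    - apply Rdiv_le_0_compat; lra.
    - apply frac_1_add_le; lra. }
  assert (Hlog := Ex_between P (fun a => log2 (1 + eta * a)) 0 (log2 (1 + amax))).
  destruct Hlog as [_ Hlog].
  { intros x Hx; destruct (Hsupport x Hx); split.
    - replace 0 with (log2 1) by (unfold log2, Rdiv; rewrite ln_1; ring).
      apply log2_le; lra.
    - apply log2_le; lra. }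
  assert (Ht : 0 <= t <= beta * (amax / (1 + amax))) by (unfold t; split; nra).
  assert (Hln2 : 0 < log2e) by (unfold log2e; apply Rinv_0_lt_compat;
                                rewrite <- ln_1; apply ln_increasing; lra).
  assert (- ln (1 - t) - t <= (beta * (amax / (1 + amax))) ^ 2)
    by (pose proof (ln_1_sub_le t ltac:(lra)); nra).
  nra.
Qed.
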